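(* Fix $\boldsymbol{x}\in\mathcal{R}_r$ and consider the second-order cone program, in the variable $(\boldsymbol{u},d,t)\in\mathbb{R}^m\times\mathbb{R}\times\mathbb{R}$, $$\min\ t\quad\text{s.t.}\quad \Big\|E\begin{bmatrix}\boldsymbol{u}\\ d\end{bmatrix}\Big\|_2\le t,\qquad \hat{\dot V}(\boldsymbol{x},\boldsymbol{u})+m_r^V+\beta_r\sigma_r^V+\lambda V(\boldsymbol{x})\le d,\qquad \|A_r^h(\boldsymbol{x})\boldsymbol{u}+\boldsymbol{b}_r^h(\boldsymbol{x})\|_2\le \boldsymbol{c}_r^h(\boldsymbol{x})\boldsymbol{u}+d_r^h(\boldsymbol{x}),$$ with $E=\operatorname{diag}(1,\dots,1,\sqrt\rho)$. If the matrix $S_r^3(\boldsymbol{x})=A_r^h(\boldsymbol{x})^TA_r^h(\boldsymbol{x})-\boldsymbol{c}_r^h(\boldsymbol{x})^T\boldsymbol{c}_r^h(\boldsymbol{x})\in\mathbb{R}^{m\times m}$ is negative definite, then this program is feasible at $\boldsymbol{x}$.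
   Context: Setting: switching system $\dot{\boldsymbol{x}}=\sum_{r=1}^R\delta_r(f_r(\boldsymbol{x})+g_r(\boldsymbol{x})\boldsymbol{u})$, $\boldsymbol{x}\in\mathcal{X}\subset\mathbb{R}^n$, $\boldsymbol{u}\in\mathbb{R}^m$, with pairwise disjoint regions $\mathcal{R}_r$ covering $\mathcal{X}$ and $\delta_r$ the indicator of $\mathcal{R}_r$; nominal model $\dot{\boldsymbol{x}}=\hat f(\boldsymbol{x})+\hat g(\boldsymbol{x})\boldsymbol{u}$; continuously differentiable CLF $V$ and CBF $h$ with nominal derivative $\hat{\dot V}=L_{\hat f}V+L_{\hat g}V\boldsymbol{u}$; constants $\rho>0$, $\lambda>0$, $\beta_r>0$. Write $\boldsymbol{y}=[1,\boldsymbol{u}^T]^T$. For region $r$, Gaussian-process posteriors (zero prior mean, kernel $\boldsymbol{y}^T\operatorname{diag}(k_r^1(\boldsymbol{x},\boldsymbol{x}'),\dots,k_r^{m+1}(\boldsymbol{x},\boldsymbol{x}'))\boldsymbol{y}'$ with positive-definite base kernels, noise variance $\sigma_n^2>0$) give for the CLF residual a mean $m_r^V=\boldsymbol{\mu}_r^V(\boldsymbol{x})\boldsymbol{y}$ and standard deviation $\sigma_r^V=\sqrt{\boldsymbol{y}^T\Sigma_r^V(\boldsymbol{x})\boldsymbol{y}}$, and for the CBF residual a mean $\boldsymbol{\mu}_r^h(\boldsymbol{x})\boldsymbol{y}$ ($\boldsymbol{\mu}_r^h\in\mathbb{R}^{1\times(m+1)}$) and standard deviation $\sqrt{\boldsymbol{y}^T\Sigma_r^h(\boldsymbol{x})\boldsymbol{y}}$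 with posterior covariance matrix $\Sigma_r^h(\boldsymbol{x})=\Lambda_r(\boldsymbol{x},\boldsymbol{x})-\bar K_r(K_r+\sigma_n^2I)^{-1}\bar K_r^T$. Write $\mu_r^{h1}$ for the first entry and $\boldsymbol{\mu}_r^{hm}$ for the last $m$ entries of $\boldsymbol{\mu}_r^h$. Let $L_r$ satisfy $L_r^TL_r=\Sigma_r^h(\boldsymbol{x})$, with first column $\boldsymbol{l}_r^1$ and last $m$ columns $L_r^m$. Let $\boldsymbol{\varphi}_r^h=[L_{f_r}h-L_{\hat f}h,\ L_{g_r}h-L_{\hat g}h]\in\mathbb{R}^{1\times(m+1)}$ with first entry $\varphi_r^{hf}$ and last $m$ entries $\boldsymbol{\varphi}_r^{hg}$. Define $A_r^h=\beta_rL_r^m$, $\boldsymbol{b}_r^h=\beta_r\boldsymbol{l}_r^1$, $\boldsymbol{c}_r^h=\boldsymbol{\varphi}_r^{hg}+\boldsymbol{\mu}_r^{hm}$, $d_r^h=\varphi_r^{hf}+\mu_r^{h1}$. *)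

From mathcomp Require Import all_boot all_order all_algebra.
Set Implicit Arguments. Unset Strict Implicit. Unset Printing Implicit Defensive.
Import Order.TTheory GRing.Theory Num.Theory.
Local Open Scope ring_scope.

Section Defs.
Variable R : rcfType.

Definition norm2 (k : nat) (v : 'cV[R]_k) : R := Num.sqrt (\sum_i v i 0 ^+ 2).

Definition negdef (k : nat) (S : 'M[R]_k) : Prop :=
  forall v : 'cV[R]_k, v != 0 -> (v^T *m S *m v) 0 0 < 0.

Definition Emat (m : nat) (rho : R) : 'M[R]_(m + 1) :=
  block_mx (1%:M : 'M_m) 0 0 ((Num.sqrt rho)%:M : 'M_1).

Definition yvec (m : nat) (u : 'cV[R]_m) : 'cV[R]_(1 + m) :=
  col_mx (1%:M : 'M_1) u.

Definition Lie (n k : nat) (grad : 'rV[R]_n) (F : 'M[R]_(n, k)) : 'M[R]_(1, k) :=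
  grad *m F.

Definition phi_h (n m : nat) (gradh : 'rV[R]_n) (fr fhat : 'cV[R]_n)
  (gr ghat : 'M[R]_(n, m)) : 'rV[R]_(1 + m) :=
  row_mx (Lie gradh fr - Lie gradh fhat) (Lie gradh gr - Lie gradh ghat).

Definition A_h (m : nat) (beta : R) (L : 'M[R]_(1 + m)) : 'M[R]_(1 + m, m) :=
  beta *: rsubmx L.
Definition b_h (m : nat) (beta : R) (L : 'M[R]_(1 + m)) : 'cV[R]_(1 + m) :=
  beta *: lsubmx L.
Definition c_h (m : nat) (phi mu : 'rV[R]_(1 + m)) : 'rV[R]_m :=
  rsubmx phi + rsubmx mu.
Definition d_h (m : nat) (phi mu : 'rV[R]_(1 + m)) : R :=
  (lsubmx phi) 0 0 + (lsubmx mu) 0 0.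

Definition S3 (m : nat) (A : 'M[R]_(1 + m, m)) (c : 'rV[R]_m) : 'M[R]_m :=
  A^T *m A - c^T *m c.

Definition Vhatdot (n m : nat) (gradV : 'rV[R]_n) (fhat : 'cV[R]_n)
  (ghat : 'M[R]_(n, m)) (u : 'cV[R]_m) : R :=
  (Lie gradV fhat) 0 0 + (Lie gradV ghat *m u) 0 0.

(* GP mean and standard deviation of the CLF residual *)
Definition mV (m : nat) (mu : 'rV[R]_(1 + m)) (u : 'cV[R]_m) : R :=
  (mu *m yvec u) 0 0.
Definition sigV (m : nat) (Sig : 'M[R]_(1 + m)) (u : 'cV[R]_m) : R :=
  Num.sqrt (((yvec u)^T *m Sig *m yvec u) 0 0).

Definition socp_feasible (n m : nat) (rho lambda beta : R) (Vx : R)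
  (gradV : 'rV[R]_n) (fhat : 'cV[R]_n) (ghat : 'M[R]_(n, m))
  (muV : 'rV[R]_(1 + m)) (SigV : 'M[R]_(1 + m))
  (A : 'M[R]_(1 + m, m)) (b : 'cV[R]_(1 + m)) (c : 'rV[R]_m) (d : R) : Prop :=
  exists (u : 'cV[R]_m) (dd t : R),
    [/\ norm2 (Emat m rho *m col_mx u (dd%:M : 'M_1)) <= t,
        Vhatdot gradV fhat ghat u + mV muV u + beta * sigV SigV u + lambda * Vx
          <= dd
      & norm2 (A *m u + b) <= (c *m u) 0 0 + d].

End Defs.

(* The CLF constraint and the norm constraint only bound the slack variables
   from below, so they are met by setting the slacks equal to their left-hand
   sides; feasibility reduces to the cone constraint ||A u + b|| <= c u + d.
   Negative definiteness of A^T A - c^T c gives a direction w with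
   ||A w|| < c w (after flipping the sign of w if needed).  Along u = s w the
   gap (c u + d)^2 - ||A u + b||^2 is a quadratic in s with positive leading
   coefficient (c w)^2 - ||A w||^2, and c u + d grows linearly, so the cone
   constraint holds for s large enough. *)

From mathcomp Require Import all_boot all_order all_algebra ring lra.
Set Implicit Arguments. Unset Strict Implicit. Unset Printing Implicit Defensive.
Import Order.TTheory GRing.Theory Num.Theory.
Local Open Scope ring_scope.

Lemma norm2_le (R : rcfType) (k : nat) (v : 'cV[R]_k) (t : R) :
  0 <= t -> \sum_i v i 0 ^+ 2 <= t ^+ 2 -> norm2 v <= t.
Proof. by move=> t0 le_vt; rewrite -(ger0_norm t0) -sqrtr_sqr ler_wsqrtr. Qed.

Lemma quad_form_gram_sub (R : comPzRingType) (p m : nat)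
    (A : 'M[R]_(p, m)) (c : 'rV[R]_m) (v : 'cV[R]_m) :
  (v^T *m (A^T *m A - c^T *m c) *m v) 0 0
    = \sum_i (A *m v) i 0 ^+ 2 - (c *m v) 0 0 ^+ 2.
Proof.
rewrite mulmxBr mulmxBl !mulmxA -!trmx_mul -!mulmxA !mxE big_ord1 !mxE.
by congr (_ - _); apply: eq_bigr => i _; rewrite !mxE.
Qed.

Lemma exists_scale_sqr_le (R : realFieldType) (a k B b2 d : R) :
  0 < k -> a < k ^+ 2 ->
  exists s, 0 <= s * k + d /\ s ^+ 2 * a + 2 * s * B + b2 <= (s * k + d) ^+ 2.
Proof.
move=> k_gt0 a_lt; set del := k ^+ 2 - a.
have del_gt0 : 0 < del by rewrite subr_gt0.
set X := 2 * `|d * k - B| + `|b2|.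
have X_ge0 : 0 <= X by rewrite addr_ge0 ?mulr_ge0.
(* Chosen so that s >= 1, s * del >= X and s * k >= |d|. *)
set s := 1 + X / del + `|d| / k.
have Xdel_ge0 : 0 <= X / del by rewrite divr_ge0 // ltW.
have dk_ge0 : 0 <= `|d| / k by rewrite divr_ge0 // ltW.
have s_ge1 : 1 <= s by rewrite /s -addrA lerDl addr_ge0.
have sdel : X <= s * del.
  rewrite /s 2!mulrDl [X / del * del]divfK ?gt_eqF //.
  by have := mulr_ge0 dk_ge0 (ltW del_gt0); lra.
have sk : `|d| <= s * k.
  rewrite /s 2!mulrDl [`|d| / k * k]divfK ?gt_eqF //.
  by have := mulr_ge0 Xdel_ge0 (ltW k_gt0); lra.
exists s; have := ler_norm (- d); rewrite normrN => dN; split; first by lra.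
have sX : s * X <= s * (s * del) by rewrite ler_wpM2l //; lra.
have sb2 : `|b2| <= s * `|b2| by rewrite -{1}(mul1r `|b2|) ler_wpM2r.
have sB : s * (B - d * k) <= s * `|d * k - B|.
  by rewrite ler_wpM2l ?(le_trans _ s_ge1) // -normrN opprB ler_norm.
have := ler_norm b2; rewrite /X /del in sX; nra.
Qed.

Lemma cone_feasible_of_direction (R : rcfType) (p m : nat)
    (A : 'M[R]_(p, m)) (b : 'cV[R]_p) (c : 'rV[R]_m) (d : R) (w : 'cV[R]_m) :
  0 < (c *m w) 0 0 -> \sum_i (A *m w) i 0 ^+ 2 < (c *m w) 0 0 ^+ 2 ->
  exists u, norm2 (A *m u + b) <= (c *m u) 0 0 + d.
Proof.
move=> cw_gt0 Aw_lt.
have [s [s_ge0 s_le]] := exists_scale_sqr_le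
  (\sum_i (A *m w) i 0 * b i 0) (\sum_i b i 0 ^+ 2) d cw_gt0 Aw_lt.
exists (s *: w).
have -> : (c *m (s *: w)) 0 0 = s * (c *m w) 0 0 by rewrite -scalemxAr mxE.
apply: norm2_le => //; apply: le_trans s_le.
suff -> : \sum_i (A *m (s *: w) + b) i 0 ^+ 2 = \sum_i
    (s ^+ 2 * (A *m w) i 0 ^+ 2 + 2 * s * ((A *m w) i 0 * b i 0) + b i 0 ^+ 2).
  by rewrite !big_split /= -!mulr_sumr.
by apply: eq_bigr => i _; rewrite -scalemxAr !mxE; ring.
Qed.

Lemma exists_cone_direction (R : rcfType) (p m : nat)
    (A : 'M[R]_(p, m)) (c : 'rV[R]_m) :
  (0 < m)%N -> negdef (A^T *m A - c^T *m c) ->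
  exists w : 'cV[R]_m, 0 < (c *m w) 0 0 /\ \sum_i (A *m w) i 0 ^+ 2 < (c *m w) 0 0 ^+ 2.
Proof.
move=> m_gt0 neg.
set v : 'cV[R]_m := const_mx 1.
have v_neq0 : v != 0.
  apply/negP => /eqP /matrixP /(_ (Ordinal m_gt0) 0) /eqP.
  by rewrite !mxE oner_eq0.
have := neg _ v_neq0; rewrite quad_form_gram_sub subr_lt0 => Av_lt.
have Av_ge0 : 0 <= \sum_i (A *m v) i 0 ^+ 2 by rewrite sumr_ge0 // => i _; exact: sqr_ge0.
have [cv_lt0|cv_gt0|cv_eq0] := ltgtP ((c *m v) 0 0) 0.
- exists (- v); rewrite mulmxN mxE oppr_gt0 sqrrN; split=> //.
  by under eq_bigr do rewrite mulmxN mxE sqrrN.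
- by exists v.
- by move: Av_lt; rewrite cv_eq0 expr0n /=; lra.
Qed.

Lemma cone_feasible_of_negdef (R : rcfType) (p m : nat)
    (A : 'M[R]_(p, m)) (b : 'cV[R]_p) (c : 'rV[R]_m) (d : R) :
  (0 < m)%N -> negdef (A^T *m A - c^T *m c) ->
  exists u, norm2 (A *m u + b) <= (c *m u) 0 0 + d.
Proof.
move=> m_gt0 /(exists_cone_direction m_gt0) [w [cw_gt0 Aw_lt]].
exact: cone_feasible_of_direction cw_gt0 Aw_lt.
Qed.

Theorem corollary3 (R : rcfType) (n m NR : nat)
  (Reg : 'I_NR -> 'cV[R]_n -> Prop)
  (f : 'I_NR -> 'cV[R]_n -> 'cV[R]_n) (g : 'I_NR -> 'cV[R]_n -> 'M[R]_(n, m))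
  (fhat : 'cV[R]_n -> 'cV[R]_n) (ghat : 'cV[R]_n -> 'M[R]_(n, m))
  (V h : 'cV[R]_n -> R) (gradV gradh : 'cV[R]_n -> 'rV[R]_n)
  (muV muh : 'I_NR -> 'cV[R]_n -> 'rV[R]_(1 + m))
  (SigV Sigh : 'I_NR -> 'cV[R]_n -> 'M[R]_(1 + m))
  (L : 'I_NR -> 'cV[R]_n -> 'M[R]_(1 + m))
  (rho lambda : R) (beta : 'I_NR -> R)
  (r : 'I_NR) (x : 'cV[R]_n) :
  (0 < m)%N ->
  0 < rho -> 0 < lambda -> (forall r', 0 < beta r') ->
  (forall r' x' (y : 'cV[R]_(1 + m)), 0 <= (y^T *m SigV r' x' *m y) 0 0) ->
  (forall r' x', (L r' x')^T *m L r' x' = Sigh r' x') ->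
  Reg r x ->
  let phi := phi_h (gradh x) (f r x) (fhat x) (g r x) (ghat x) in
  let A := A_h (beta r) (L r x) in
  let b := b_h (beta r) (L r x) in
  let c := c_h phi (muh r x) in
  let d := d_h phi (muh r x) in
  negdef (S3 A c) ->
  socp_feasible rho lambda (beta r) (V x) (gradV x) (fhat x) (ghat x)
    (muV r x) (SigV r x) A b c d.
Proof.
move=> m_gt0 _ _ _ _ _ _ phi A b c d neg.
have [u cone_u] := cone_feasible_of_negdef b d m_gt0 neg.
set dd := Vhatdot (gradV x) (fhat x) (ghat x) u + mV (muV r x) u
          + beta r * sigV (SigV r x) u + lambda * V x.
by exists u, dd, (norm2 (Emat m rho *m col_mx u (dd%:M : 'M_1))).
Qed.
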